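(* Let $S$ be a Boolean inverse monoid satisfying condition (H). Then: (1) for each $s\in S$ there is an idempotent $e_s$ such that $e_s=\bigvee_{c\in C}c$ for every finite cover $C\subseteq\mathcal J_s$ of $\mathcal J_s$, and $\mathcal J_s=\{e\in E(S): e\le e_s\}$; (2) $e_{s^*}=e_s$ for all $s\in S$; (3) $e_{st}\le ss^*$ and $e_{st}\le t^*t$ for all $s,t\in S$; (4) $e_{s^*t}e_{t^*r}\le e_{s^*r}$ for all $s,t,r\in S$.
   Context: An inverse semigroup is a semigroup $S$ in which every $s$ has a unique $s^*$ with $ss^*s=s$, $s^*ss^*=s^*$; assumed countable with a zero. $E(S)$ is its set of idempotents; natural order $s\le t$ iff $ts^*s=s$ (on idempotents $e\le f$ iff $ef=e$). A Boolean inverse monoid is an inverse monoid in which every finite compatible set (pairwise $s^*t,st^*\in E(S)$) has a join, multiplication distributes over such joins, and $E(S)$ is a Boolean algebra. For $Z\subseteq W\subseteq E(S)$, $Z$ is a cover of $W$ if every nonzero $w\in W$ has some $z\in Z$ with $zw\ne0$. For $s\in S$ let $\mathcal J_s=\{e\in E(S): se=e\}$. Condition (H): for every $s\in S$, $\mathcal J_s$ admits a finite cover (by a finite subset of $\mathcal J_s$). *)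

From Stdlib Require Import List.
Import ListNotations.
Set Implicit Arguments.

Record InvMonoid := {
  car :> Type;
  mul : car -> car -> car;
  one : car;
  zero : car;
  star : car -> car;
  mulA : forall a b c, mul a (mul b c) = mul (mul a b) c;
  mul1s : forall a, mul one a = a;
  muls1 : forall a, mul a one = a;
  mul0s : forall a, mul zero a = zero;
  muls0 : forall a, mul a zero = zero;
  star_inv1 : forall s, mul (mul s (star s)) s = s;
  star_inv2 : forall s, mul (mul (star s) s) (star s) = star s;
  star_unique : forall s t, mul (mul s t) s = s -> mul (mul t s) t = t -> t = star s;
  countable : exists f : car -> nat, forall x y, f x = f y -> x = y
}.

Section Defs.
Context {S : InvMonoid}.
Local Notation "a * b" := (mul S a b).
Local Notation "s ^*" := (star S s) (at level 2, format "s ^*").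

Definition idem (e : S) : Prop := e * e = e.

Definition nle (s t : S) : Prop := t * (s^* * s) = s.

Definition compat (s t : S) : Prop := idem (s^* * t) /\ idem (s * t^*).
Definition compat_set (A : list S) : Prop :=
  forall s t, In s A -> In t A -> compat s t.

Definition is_join (A : list S) (j : S) : Prop :=
  (forall a, In a A -> nle a j) /\
  (forall u, (forall a, In a A -> nle a u) -> nle j u).

Definition is_joinE (e f j : S) : Prop :=
  idem j /\ nle e j /\ nle f j /\
  (forall u, idem u -> nle e u -> nle f u -> nle j u).
Definition is_meetE (e f m : S) : Prop :=
  idem m /\ nle m e /\ nle m f /\
  (forall u, idem u -> nle u e -> nle u f -> nle u m).

(* E(S), with the natural order, is a Boolean algebra: a bounded
   distributive lattice in which every element has a complement. *)
Definition E_boolean : Prop :=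
  (exists bot top, idem bot /\ idem top /\
     (forall e, idem e -> nle bot e /\ nle e top) /\
     (forall e, idem e -> exists c, idem c /\ is_meetE e c bot /\ is_joinE e c top)) /\
  (forall e f, idem e -> idem f -> exists j, is_joinE e f j) /\
  (forall e f, idem e -> idem f -> exists m, is_meetE e f m) /\
  (forall e f g fg m1 m2 m3 j, idem e -> idem f -> idem g ->
     is_joinE f g fg -> is_meetE e fg m1 -> is_meetE e f m2 -> is_meetE e g m3 ->
     is_joinE m2 m3 j -> m1 = j).

Definition boolean_inverse_monoid : Prop :=
  (forall A, compat_set A -> exists j, is_join A j) /\
  (forall A j s, compat_set A -> is_join A j ->
     is_join (map (fun a => s * a) A) (s * j) /\
     is_join (map (fun a => a * s) A) (j * s)) /\
  E_boolean.

Definition Jset (s e : S) : Prop := idem e /\ s * e = e.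

(* Z is a cover of W (Z subset of W assumed separately) *)
Definition is_cover (Z : list S) (W : S -> Prop) : Prop :=
  forall w, W w -> w <> zero S -> exists z, In z Z /\ z * w <> zero S.

Definition finite_cover_J (s : S) (C : list S) : Prop :=
  (forall c, In c C -> Jset s c) /\ is_cover C (Jset s).

Definition condH : Prop := forall s : S, exists C, finite_cover_J s C.

End Defs.

From Stdlib Require Import List Setoid Classical ClassicalEpsilon.

(* In a Boolean inverse monoid J_s is the downset of s among the idempotents.
   If C is a finite cover of J_s by elements of J_s, its join j lies in J_s
   by distributivity, and every e in J_s lies below j: otherwise e times the
   complement of j would be a nonzero element of J_s disjoint from all of C.
   So e_s is the greatest element of J_s, and (2)-(4) become statements about
   downsets: J_{s^*} = J_s, J_{st} lies below s s^* and t^* t, and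
   J_{s^*t} J_{t^*r} is contained in J_{s^*r} because s^*t t^*r <= s^*r. *)

Section InverseMonoid.
Variable S : InvMonoid.
Local Notation "a * b" := (mul S a b).
Local Notation "s ^*" := (star S s) (at level 2, format "s ^*").

Lemma mul_congr_l (a b : S) : a = b -> forall y, y * a = y * b.
Proof. now intros ->. Qed.

Lemma one_mul_inj (a b : S) : one S * a = one S * b -> a = b.
Proof. now rewrite !(mul1s S). Qed.

(* To rewrite with an equation [a = b] between words inside a longer word, we
   rewrite with [forall y, y * a = y * b] in left-associated normal form; it
   matches every occurrence of [a] that has a left neighbour, which
   [assoc_normalize] guarantees by prefixing the goal with [one]. *)
Ltac word_eq H H' := pose proof (mul_congr_l _ _ H) as H'; repeat setoid_rewrite (mulA S) in H'.
Ltac assoc_normalize := apply one_mul_inj; rewrite ?(mulA S).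

Lemma star_involutive (s : S) : s^*^* = s.
Proof. symmetry. apply (star_unique S); [apply star_inv2 | apply star_inv1]. Qed.

Lemma star_idem (e : S) : idem e -> e^* = e.
Proof. unfold idem; intro He. symmetry; apply (star_unique S); rewrite !He; auto. Qed.

Lemma idem_mul (e f : S) : idem e -> idem f -> idem (e * f).
Proof.
  unfold idem; intros He Hf.
  word_eq He He'. word_eq Hf Hf'.
  pose proof (star_inv1 S (e * f)) as I1. word_eq I1 I1'.
  pose proof (star_inv2 S (e * f)) as I2. word_eq I2 I2'.
  assert (Hstar : f * (e * f)^* * e = (e * f)^*).
  { apply (star_unique S); assoc_normalize.
    - repeat first [rewrite He' | rewrite Hf' | rewrite I1']. reflexivity.
    - repeat first [rewrite He' | rewrite Hf' | rewrite I2']. reflexivity. }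
  assert (Hidem : idem ((e * f)^*)).
  { unfold idem. rewrite <- Hstar. assoc_normalize. rewrite I2'. reflexivity. }
  pose proof (star_idem _ Hidem) as Hs. rewrite star_involutive in Hs.
  unfold idem; rewrite Hs. exact Hidem.
Qed.

Lemma idem_comm (e f : S) : idem e -> idem f -> e * f = f * e.
Proof.
  intros He Hf.
  pose proof (idem_mul _ _ He Hf) as Hef. pose proof (idem_mul _ _ Hf He) as Hfe.
  transitivity ((e * f)^*); [symmetry; apply star_idem; auto |].
  symmetry. unfold idem in *.
  word_eq He He'. word_eq Hf Hf'. word_eq Hef Hef'. word_eq Hfe Hfe'.
  apply (star_unique S); assoc_normalize.
  - repeat first [rewrite He' | rewrite Hf' | rewrite Hef']. reflexivity.
  - repeat first [rewrite He' | rewrite Hf' | rewrite Hfe']. reflexivity.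
Qed.

Lemma idem_star_mul_l (s : S) : idem (s^* * s).
Proof.
  unfold idem. pose proof (star_inv2 S s) as I. word_eq I I'.
  assoc_normalize. rewrite I'. reflexivity.
Qed.

Lemma idem_star_mul_r (s : S) : idem (s * s^*).
Proof.
  unfold idem. pose proof (star_inv1 S s) as I. word_eq I I'.
  assoc_normalize. rewrite I'. reflexivity.
Qed.

Lemma star_mul (x y : S) : (x * y)^* = y^* * x^*.
Proof.
  symmetry. apply (star_unique S).
  - pose proof (idem_comm _ _ (idem_star_mul_r y) (idem_star_mul_l x)) as C. word_eq C C'.
    pose proof (star_inv1 S x) as Ix. word_eq Ix Ix'.
    pose proof (star_inv1 S y) as Iy. word_eq Iy Iy'.
    assoc_normalize. rewrite C', Ix', Iy'. reflexivity.
  - pose proof (idem_comm _ _ (idem_star_mul_l x) (idem_star_mul_r y)) as C. word_eq C C'.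
    pose proof (star_inv2 S x) as Ix. word_eq Ix Ix'.
    pose proof (star_inv2 S y) as Iy. word_eq Iy Iy'.
    assoc_normalize. rewrite C', Ix', Iy'. reflexivity.
Qed.

Lemma mul_idem_conj (b f : S) : idem f -> b * f = b * f * b^* * b.
Proof.
  intro Hf. symmetry.
  pose proof (idem_comm _ _ Hf (idem_star_mul_l b)) as C. word_eq C C'.
  pose proof (star_inv1 S b) as I. word_eq I I'.
  assoc_normalize. rewrite C', I'. reflexivity.
Qed.

Lemma nle_refl (a : S) : nle a a.
Proof. unfold nle. rewrite (mulA S). apply star_inv1. Qed.

Lemma nle_idemE (e f : S) : idem e -> (nle e f <-> f * e = e).
Proof. intro He. unfold nle. rewrite (star_idem _ He). unfold idem in He. rewrite He. tauto. Qed.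

Lemma nle_idem_antisym (e f : S) : idem e -> idem f -> nle e f -> nle f e -> e = f.
Proof.
  intros He Hf Hef Hfe. apply nle_idemE in Hef; apply nle_idemE in Hfe; auto.
  rewrite <- Hef, (idem_comm _ _ Hf He). auto.
Qed.

Lemma idem_nle_one (e : S) : idem e -> nle e (one S).
Proof. intro He. apply nle_idemE; auto. apply mul1s. Qed.

Lemma nle_left (a b : S) : nle a b -> a = a * a^* * b.
Proof.
  intro H.
  assert (Ha : a^* = a^* * a * b^*).
  { assert (H1 : a^* = (b * (a^* * a))^*) by (unfold nle in H; rewrite H; reflexivity).
    rewrite star_mul, (star_idem _ (idem_star_mul_l a)) in H1. exact H1. }
  assert (Hrange : a * a^* = a * b^*).
  { rewrite Ha at 1. pose proof (star_inv1 S a) as I. word_eq I I'.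
    assoc_normalize. rewrite I'. reflexivity. }
  unfold nle in H. rewrite <- H at 1.
  rewrite (mul_idem_conj _ _ (idem_star_mul_l a)), H, <- Hrange. reflexivity.
Qed.

Lemma nle_star (a b : S) : nle a b -> nle (a^*) (b^*).
Proof.
  intro H. pose proof (nle_left _ _ H) as Hl. unfold nle.
  assert (Ha : a^* = (a * a^* * b)^*) by (rewrite <- Hl; reflexivity).
  rewrite !star_mul in Ha. rewrite Ha at 3. reflexivity.
Qed.

Lemma nle_trans (a b c : S) : nle a b -> nle b c -> nle a c.
Proof.
  intros Hab Hbc.
  pose proof (nle_left _ _ Hab) as Hl.
  assert (E1 : a^* * a = a^* * b).
  { rewrite Hl at 2. pose proof (star_inv2 S a) as I. word_eq I I'.
    assoc_normalize. rewrite I'. reflexivity. }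
  assert (E2 : b^* * b * (a^* * a) = a^* * a).
  { rewrite <- (idem_comm _ _ (idem_star_mul_l a) (idem_star_mul_l b)), E1 at 1.
    pose proof (star_inv1 S b) as I. word_eq I I'.
    assoc_normalize. rewrite I', <- !(mulA S (one S)), <- E1. reflexivity. }
  unfold nle in *. rewrite <- E2, (mulA S), Hbc. exact Hab.
Qed.

Lemma nle_mul (a b c d : S) : nle a b -> nle c d -> nle (a * c) (b * d).
Proof.
  intros Hab Hcd. unfold nle in *.
  assert (K : d * (c^* * (a^* * a) * c) = a^* * a * c).
  { transitivity (d * (c^* * c * c^*) * (a^* * a) * c).
    { rewrite (star_inv2 S c), !(mulA S). reflexivity. }
    transitivity (c * c^* * (a^* * a) * c).
    { rewrite (mulA S d (c^* * c) (c^*)), Hcd. reflexivity. }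
    rewrite (idem_comm _ _ (idem_star_mul_r c) (idem_star_mul_l a)).
    rewrite <- (mulA S), <- (mulA S (a^*)), <- (mulA S (a^*)), (star_inv1 S c), !(mulA S).
    reflexivity. }
  rewrite star_mul.
  transitivity (b * (d * (c^* * (a^* * a) * c))); [rewrite !(mulA S); reflexivity |].
  rewrite K, !(mulA S), <- (mulA S b), Hab. reflexivity.
Qed.

Lemma is_meetE_mul (e f : S) : idem e -> idem f -> is_meetE e f (e * f).
Proof.
  intros He Hf. pose proof (idem_mul _ _ He Hf) as Hef. split; [auto | split; [| split]].
  - apply nle_idemE; auto. rewrite (mulA S). unfold idem in He. rewrite He. reflexivity.
  - apply nle_idemE; auto. rewrite (idem_comm _ _ He Hf), (mulA S).
    unfold idem in Hf. rewrite Hf. reflexivity.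
  - intros u Hu Hue Huf. apply nle_idemE in Hue; apply nle_idemE in Huf; auto.
    apply nle_idemE; auto. rewrite <- (mulA S), Huf, Hue. reflexivity.
Qed.

Lemma is_meetE_unique (e f m : S) : idem e -> idem f -> is_meetE e f m -> m = e * f.
Proof.
  intros He Hf [Hm [Hme [Hmf Hglb]]].
  destruct (is_meetE_mul _ _ He Hf) as [Hef [Hefe [Heff Hglb']]].
  apply nle_idem_antisym; auto.
Qed.

Lemma idem_zero : idem (zero S).
Proof. apply mul0s. Qed.

Lemma join_idem (C : list S) (j : S) :
  (forall c, In c C -> idem c) -> is_join C j -> idem j.
Proof.
  intros HC [_ Hlub].
  assert (H : nle j (one S)) by (apply Hlub; intros; apply idem_nle_one; auto).
  unfold nle in H. rewrite (mul1s S) in H. rewrite <- H. apply idem_star_mul_l.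
Qed.

Lemma compat_set_idem (C : list S) : (forall c, In c C -> idem c) -> compat_set C.
Proof. intros HC a b Ha Hb. split; rewrite star_idem by auto; apply idem_mul; auto. Qed.

Lemma Jset_nleE (s e : S) : Jset s e <-> idem e /\ nle e s.
Proof. split; intros [He H]; split; auto; apply nle_idemE; auto. Qed.

Lemma Jset_star (s e : S) : Jset s e -> Jset (s^*) e.
Proof.
  rewrite !Jset_nleE. intros [He H]. split; auto.
  apply nle_star in H. rewrite star_idem in H; auto.
Qed.

Lemma Jset_mul_r (s e : S) : Jset s e -> e * s = e.
Proof.
  intro H. apply Jset_star in H. destruct H as [He H].
  apply (f_equal (star S)) in H. rewrite star_mul, star_involutive, star_idem in H; auto.
Qed.

Lemma Jset_downward (s x e : S) : Jset s x -> idem e -> nle e x -> Jset s e.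
Proof.
  intros [Hx Hsx] He Hex. apply nle_idemE in Hex; auto. split; auto.
  rewrite <- Hex, (mulA S), Hsx. reflexivity.
Qed.

Lemma Jset_mul_nle_range (s t e : S) : Jset (s * t) e -> nle e (s * s^*).
Proof.
  intros [He H]. apply nle_idemE; auto. rewrite <- H.
  pose proof (star_inv1 S s) as I. word_eq I I'.
  assoc_normalize. rewrite I'. reflexivity.
Qed.

Lemma Jset_mul_nle_domain (s t e : S) : Jset (s * t) e -> nle e (t^* * t).
Proof.
  intro HJ. pose proof (Jset_mul_r _ _ HJ) as R. destruct HJ as [He _].
  apply nle_idemE; auto. rewrite (idem_comm _ _ (idem_star_mul_l t) He), <- R at 1.
  word_eq R R'. pose proof (star_inv1 S t) as I. word_eq I I'.
  assoc_normalize. rewrite I', R'. reflexivity.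
Qed.

Lemma Jset_mul_compose (s t r e1 e2 : S) :
  Jset (s^* * t) e1 -> Jset (t^* * r) e2 -> Jset (s^* * r) (e1 * e2).
Proof.
  rewrite !Jset_nleE. intros [He1 H1] [He2 H2]. split; [apply idem_mul; auto |].
  apply nle_trans with ((s^* * t) * (t^* * r)); [apply nle_mul; auto |].
  rewrite (mulA S (s^* * t)), <- (mulA S (s^*) t).
  apply nle_mul; [| apply nle_refl]. rewrite <- (muls1 S (s^*)) at 2.
  apply nle_mul; [apply nle_refl | apply idem_nle_one, idem_star_mul_r].
Qed.

Definition is_Jmax (s x : S) : Prop := Jset s x /\ forall e, Jset s e -> nle e x.

Lemma is_Jmax_unique (s x y : S) : is_Jmax s x -> is_Jmax s y -> x = y.
Proof.
  intros [Hx Hxmax] [Hy Hymax].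
  apply nle_idem_antisym; [apply Hx | apply Hy | apply Hymax | apply Hxmax]; auto.
Qed.

Lemma is_Jmax_JsetE (s x e : S) : is_Jmax s x -> (Jset s e <-> idem e /\ nle e x).
Proof.
  intros [Hx Hmax]. split.
  - intro He. split; [apply He | auto].
  - intros [He Hex]. exact (Jset_downward _ _ _ Hx He Hex).
Qed.

Lemma is_Jmax_star (s x : S) : is_Jmax s x -> is_Jmax (s^*) x.
Proof.
  intros [Hx Hmax]. split; [apply Jset_star; auto |].
  intros e He. apply Hmax. apply Jset_star in He. rewrite star_involutive in He. exact He.
Qed.

Section Boolean.
Hypothesis HE : @E_boolean S.

Lemma E_boolean_bot_zero (bot : S) : (forall e, idem e -> nle bot e) -> bot = zero S.
Proof. intro Hbot. pose proof (Hbot _ idem_zero) as H. unfold nle in H. rewrite (mul0s S) in H. auto. Qed.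

(* By distributivity, [e = e(j \/ c) = ej \/ ec = ej]. *)
Lemma idem_complement (j : S) : idem j ->
  exists c, idem c /\ j * c = zero S /\ forall e, idem e -> e * c = zero S -> nle e j.
Proof.
  intro Hj.
  destruct HE as [[bot [top [Hbot [Htop [Hbounds Hcompl]]]]] [_ [_ Hdistr]]].
  assert (Hbot0 : bot = zero S) by (apply E_boolean_bot_zero; apply Hbounds).
  destruct (Hcompl j Hj) as [c [Hc [Hmeet Hjoin]]].
  apply is_meetE_unique in Hmeet; auto. rewrite Hbot0 in Hmeet.
  exists c. split; [auto | split; [auto |]].
  intros e He Hec.
  assert (Hetop : is_meetE e top e).
  { pose proof (is_meetE_mul _ _ He Htop) as H.
    destruct (Hbounds e He) as [_ Ht]. apply nle_idemE in Ht; auto.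
    rewrite (idem_comm e top), Ht in H; auto. }
  assert (Hjoin0 : is_joinE (e * j) (e * c) (e * j)).
  { rewrite Hec. split; [apply idem_mul; auto |]. split; [apply nle_refl |].
    split; [apply nle_idemE; [apply idem_zero | apply muls0] | auto]. }
  pose proof (Hdistr e j c top e (e * j) (e * c) (e * j) He Hj Hc Hjoin Hetop
    (is_meetE_mul _ _ He Hj) (is_meetE_mul _ _ He Hc) Hjoin0) as Heq.
  apply nle_idemE; auto. rewrite (idem_comm j e) by auto. auto.
Qed.

Lemma cover_join_upper (s : S) (C : list S) (j : S) :
  (forall c, In c C -> Jset s c) -> is_cover C (Jset s) -> is_join C j ->
  forall e, Jset s e -> nle e j.
Proof.
  intros HC Hcov Hj e He.
  assert (Hji : idem j) by (apply (join_idem C); [intros; apply HC |]; auto).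
  destruct (idem_complement j Hji) as [c [Hc [Hjc Hdisj]]].
  apply Hdisj; [apply He |].
  destruct (classic (e * c = zero S)) as [| Hne]; auto.
  assert (HJ : Jset s (e * c)).
  { split; [apply idem_mul; [apply He | auto] |]. rewrite (mulA S), (proj2 He). reflexivity. }
  destruct (Hcov _ HJ Hne) as [z [Hz Hzec]]. exfalso. apply Hzec.
  assert (Hzi : idem z) by apply (HC _ Hz).
  (* [z <= j] and [j c = 0] force [z (e c) = 0]. *)
  assert (Hjz : j * z = z) by (apply nle_idemE; auto; apply (proj1 Hj); auto).
  rewrite (mulA S), (idem_comm z e) by (auto; apply He).
  rewrite <- (mulA S), <- Hjz, (idem_comm j z) by auto.
  rewrite <- (mulA S z), Hjc, !(muls0 S). reflexivity.
Qed.

End Boolean.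

Section BooleanInverseMonoid.
Hypothesis Hb : @boolean_inverse_monoid S.

Lemma join_Jset (s : S) (C : list S) (j : S) :
  (forall c, In c C -> Jset s c) -> is_join C j -> Jset s j.
Proof.
  intros HC Hj.
  assert (HCi : forall c, In c C -> idem c) by (intros; apply HC; auto).
  destruct Hb as [_ [Hdistr _]].
  destruct (Hdistr C j s (compat_set_idem _ HCi) Hj) as [Hsj _].
  assert (HsC : map (fun a => s * a) C = C).
  { rewrite <- (map_id C) at 2. apply map_ext_in. intros a Ha. apply HC; auto. }
  rewrite HsC in Hsj.
  pose proof (join_idem _ _ HCi Hj) as Hji. pose proof (join_idem _ _ HCi Hsj) as Hsji.
  split; auto. apply nle_idem_antisym; auto.
  - apply (proj2 Hsj), (proj1 Hj).
  - apply (proj2 Hj), (proj1 Hsj).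
Qed.

Lemma cover_join_is_Jmax (s : S) (C : list S) :
  finite_cover_J s C -> exists j, is_join C j /\ is_Jmax s j.
Proof.
  intros [HC Hcov].
  assert (HCi : forall c, In c C -> idem c) by (intros; apply HC; auto).
  destruct (proj1 Hb C (compat_set_idem _ HCi)) as [j Hj].
  exists j. split; [auto | split].
  - exact (join_Jset _ _ _ HC Hj).
  - exact (cover_join_upper (proj2 (proj2 Hb)) _ _ _ HC Hcov Hj).
Qed.

End BooleanInverseMonoid.
End InverseMonoid.

Theorem mainTheorem5 (S : InvMonoid) :
  @boolean_inverse_monoid S -> @condH S ->
  exists es : S -> S,
    (* (1) *)
    (forall s : S, idem (es s) /\
       (forall C, finite_cover_J s C -> is_join C (es s)) /\
       (forall e : S, Jset s e <-> (idem e /\ nle e (es s)))) /\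
    (* (2) *)
    (forall s : S, es (star S s) = es s) /\
    (* (3) *)
    (forall s t : S, nle (es (mul S s t)) (mul S s (star S s)) /\
                     nle (es (mul S s t)) (mul S (star S t) t)) /\
    (* (4) *)
    (forall s t r : S,
       nle (mul S (es (mul S (star S s) t)) (es (mul S (star S t) r)))
           (es (mul S (star S s) r))).
Proof.
  intros Hb Hh.
  assert (Hmax : forall s, exists x, is_Jmax S s x).
  { intro s. destruct (Hh s) as [C HC].
    destruct (cover_join_is_Jmax S Hb s C HC) as [j [_ Hj]]. eauto. }
  destruct (choice _ Hmax) as [es Hes].
  exists es. split; [| split; [| split]].
  - intro s. split; [apply (Hes s) | split].
    + intros C HC. destruct (cover_join_is_Jmax S Hb s C HC) as [j [Hj Hjmax]].
      rewrite <- (is_Jmax_unique S s j (es s)); auto.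
    + intro e. apply is_Jmax_JsetE, Hes.
  - intro s. apply (is_Jmax_unique S (star S s)); [apply Hes | apply is_Jmax_star, Hes].
  - intros s t. split.
    + apply (Jset_mul_nle_range S s t), Hes.
    + apply (Jset_mul_nle_domain S s t), Hes.
  - intros s t r. apply (Hes (mul S (star S s) r)).
    apply Jset_mul_compose with t; apply Hes.
Qed.
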